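(* Let $\mathbb{C}$ be a regular category such that for any three effective equivalence relations $\alpha,\beta,\gamma$ on any object $X$ of $\mathbb{C}$ we have $\alpha\cap(\beta\circ\gamma)=(\alpha\cap\beta)\circ(\alpha\cap\gamma)$. Then $\mathbb{C}$ is a majority category.
   Context: A category is regular if it has finite limits and coequalizers of kernel pairs and regular epimorphisms are pullback-stable; morphisms factor as regular epi followed by mono. Relations are subobjects of products; an equivalence relation on $X$ is effective if it is the kernel pair of some morphism out of $X$; $\cap$ denotes intersection (pullback) of subobjects. For $w:S\to W$ and a subobject $A$ of $W$, $w\in_S A$ means $w$ factors through a representative of $A$. The composite $R\circ S$ of relations represented by $(r_1,r_2):R_0\to X\times Y$ and $(s_1,s_2):S_0\to Y\times Z$ is the image of $(r_1p_1,s_2p_2):P\to X\times Z$, $(P,p_1,p_2)$ the pullback of $s_1$ along $r_2$. A ternary relation $R\leqslant X\times Y\times Z$ is majority-selecting if for all $S$ and $x,x':S\to X$, $y,y':S\to Y$, $z,z':S\to Z$: $(x,y,z')\in_S R$, $(x,y',z)\in_S R$, $(x',y,z)\in_S R$ imply $(x,y,z)\in_S R$. A category with products is a majority category if all its ternary relations are majority-selecting. *)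

Set Implicit Arguments.
Unset Strict Implicit.

Record Category := {
  Ob :> Type;
  Hom : Ob -> Ob -> Type;
  comp : forall {a b c : Ob}, Hom b c -> Hom a b -> Hom a c;
  idm : forall a : Ob, Hom a a;
  comp_assoc : forall a b c d (f : Hom a b) (g : Hom b c) (h : Hom c d),
      comp h (comp g f) = comp (comp h g) f;
  comp_id_l : forall a b (f : Hom a b), comp (idm b) f = f;
  comp_id_r : forall a b (f : Hom a b), comp f (idm a) = f
}.
Arguments Hom {C} : rename.
Arguments comp {C} {a b c} : rename.
Arguments idm {C} : rename.

Notation "g 'o' f" := (comp g f) (at level 40, left associativity).

Section Cat.
Variable C : Category.

Definition is_terminal (T : C) : Prop :=
  forall A : C, exists f : Hom A T, forall g : Hom A T, g = f.

Definition is_product (A B P : C) (p1 : Hom P A) (p2 : Hom P B) : Prop :=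
  forall (S : C) (f : Hom S A) (g : Hom S B),
    exists! h : Hom S P, p1 o h = f /\ p2 o h = g.

Definition is_equalizer (A B : C) (f g : Hom A B) (E : C) (e : Hom E A) : Prop :=
  f o e = g o e /\
  forall (S : C) (h : Hom S A), f o h = g o h -> exists! u : Hom S E, e o u = h.

Definition is_pullback (A B D : C) (f : Hom A D) (g : Hom B D)
  (P : C) (p1 : Hom P A) (p2 : Hom P B) : Prop :=
  f o p1 = g o p2 /\
  forall (S : C) (a : Hom S A) (b : Hom S B), f o a = g o b ->
    exists! h : Hom S P, p1 o h = a /\ p2 o h = b.

Definition is_kernel_pair (A D : C) (f : Hom A D) (P : C) (p1 p2 : Hom P A) : Prop :=
  is_pullback f f p1 p2.

Definition is_coequalizer (A B : C) (f g : Hom A B) (Q : C) (q : Hom B Q) : Prop :=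
  q o f = q o g /\
  forall (S : C) (h : Hom B S), h o f = h o g -> exists! u : Hom Q S, u o q = h.

Definition regular_epi (B Q : C) (e : Hom B Q) : Prop :=
  exists (A : C) (f g : Hom A B), is_coequalizer f g e.

Definition has_finite_limits : Prop :=
  (exists T : C, is_terminal T) /\
  (forall A B : C, exists (P : C) (p1 : Hom P A) (p2 : Hom P B), is_product p1 p2) /\
  (forall (A B : C) (f g : Hom A B), exists (E : C) (e : Hom E A), is_equalizer f g e).

Definition is_regular : Prop :=
  has_finite_limits /\
  (forall (A D : C) (f : Hom A D) (P : C) (p1 p2 : Hom P A),
      is_kernel_pair f p1 p2 -> exists (Q : C) (q : Hom A Q), is_coequalizer p1 p2 q) /\
  (forall (A B D : C) (e : Hom A D) (g : Hom B D) (P : C) (p1 : Hom P A) (p2 : Hom P B),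
      regular_epi e -> is_pullback e g p1 p2 -> regular_epi p2).

(* ---------- relations ----------
   A subobject of X x Y (resp. X x Y x Z) is represented by a jointly monic
   span into X, Y (resp. X, Y, Z); the relation itself is the span. *)
Record Rel2 (X Y : C) := { rel2_ob : C; rel2_1 : Hom rel2_ob X; rel2_2 : Hom rel2_ob Y }.
Record Rel3 (X Y Z : C) :=
  { rel3_ob : C; rel3_1 : Hom rel3_ob X; rel3_2 : Hom rel3_ob Y; rel3_3 : Hom rel3_ob Z }.

Definition jointly_monic2 X Y (R : Rel2 X Y) : Prop :=
  forall (S : C) (h k : Hom S (rel2_ob R)),
    rel2_1 R o h = rel2_1 R o k -> rel2_2 R o h = rel2_2 R o k -> h = k.

Definition jointly_monic3 X Y Z (R : Rel3 X Y Z) : Prop :=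
  forall (S : C) (h k : Hom S (rel3_ob R)),
    rel3_1 R o h = rel3_1 R o k -> rel3_2 R o h = rel3_2 R o k ->
    rel3_3 R o h = rel3_3 R o k -> h = k.

Definition mem2 X Y (R : Rel2 X Y) (S : C) (x : Hom S X) (y : Hom S Y) : Prop :=
  exists h : Hom S (rel2_ob R), rel2_1 R o h = x /\ rel2_2 R o h = y.

Definition mem3 X Y Z (R : Rel3 X Y Z) (S : C) (x : Hom S X) (y : Hom S Y) (z : Hom S Z)
  : Prop :=
  exists h : Hom S (rel3_ob R), rel3_1 R o h = x /\ rel3_2 R o h = y /\ rel3_3 R o h = z.

Definition same_rel2 X Y (R T : Rel2 X Y) : Prop :=
  forall (S : C) (x : Hom S X) (y : Hom S Y), mem2 R x y <-> mem2 T x y.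

Definition is_intersection X Y (R T M : Rel2 X Y) : Prop :=
  jointly_monic2 M /\
  forall (S : C) (x : Hom S X) (y : Hom S Y), mem2 M x y <-> (mem2 R x y /\ mem2 T x y).

(* M represents the composite R o T : the image of (r1 p1, t2 p2) : P -> X x Z,
   where (P, p1, p2) is the pullback of t1 along r2; "image" = regular epi
   P -> M followed by the mono M -> X x Z (jointly monic span). *)
Definition is_composite X Y Z (R : Rel2 X Y) (T : Rel2 Y Z) (M : Rel2 X Z) : Prop :=
  jointly_monic2 M /\
  exists (P : C) (p1 : Hom P (rel2_ob R)) (p2 : Hom P (rel2_ob T)) (e : Hom P (rel2_ob M)),
    is_pullback (rel2_2 R) (rel2_1 T) p1 p2 /\ regular_epi e /\
    rel2_1 M o e = rel2_1 R o p1 /\ rel2_2 M o e = rel2_2 T o p2.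

Definition is_equiv_rel X (R : Rel2 X X) : Prop :=
  jointly_monic2 R /\
  (forall (S : C) (x : Hom S X), mem2 R x x) /\
  (forall (S : C) (x y : Hom S X), mem2 R x y -> mem2 R y x) /\
  (forall (S : C) (x y z : Hom S X), mem2 R x y -> mem2 R y z -> mem2 R x z).

Definition is_effective_equiv_rel X (R : Rel2 X X) : Prop :=
  is_equiv_rel R /\
  exists (D : C) (f : Hom X D), is_kernel_pair f (rel2_1 R) (rel2_2 R).

Definition majority_selecting X Y Z (R : Rel3 X Y Z) : Prop :=
  forall (S : C) (x x' : Hom S X) (y y' : Hom S Y) (z z' : Hom S Z),
    mem3 R x y z' -> mem3 R x y' z -> mem3 R x' y z -> mem3 R x y z.

Definition has_binary_products : Prop :=
  forall A B : C, exists (P : C) (p1 : Hom P A) (p2 : Hom P B), is_product p1 p2.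

Definition is_majority_category : Prop :=
  has_binary_products /\
  forall (X Y Z : C) (R : Rel3 X Y Z), jointly_monic3 R -> majority_selecting R.

Definition effective_equiv_distributive : Prop :=
  forall (X : C) (alpha beta gamma : Rel2 X X),
    is_effective_equiv_rel alpha -> is_effective_equiv_rel beta ->
    is_effective_equiv_rel gamma ->
    forall (BG L AB AG Rt : Rel2 X X),
      is_composite beta gamma BG -> is_intersection alpha BG L ->
      is_intersection alpha beta AB -> is_intersection alpha gamma AG ->
      is_composite AB AG Rt ->
      same_rel2 L Rt.

End Cat.


(* Let R >-> X x Y x Z have projections r1, r2, r3, and let alpha, beta,
   gamma be the kernel pairs of r1, r2, r3, effective equivalence relations
   on R.  The three given elements u = (x,y,z'), v = (x,y',z), w = (x',y,z)
   of R satisfy u alpha v, u beta w and w gamma v, so (u,v) lies in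
   alpha /\ (beta o gamma) = (alpha /\ beta) o (alpha /\ gamma).  Hence,
   after pulling back along a regular epimorphism, there is t in R with
   u (alpha /\ beta) t (alpha /\ gamma) v, i.e. t = (x,y,z).  Regular
   epimorphisms are orthogonal to monomorphisms, so (x,y,z) lies in R. *)

Set Implicit Arguments.
Unset Strict Implicit.

Section Regular.
Variable C : Category.

Lemma unique_witness_eq (T : Type) (P : T -> Prop) (x y : T) :
  (exists! h, P h) -> P x -> P y -> x = y.
Proof.
  intros [h [_ U]] Hx Hy. rewrite <- (U x Hx), <- (U y Hy). reflexivity.
Qed.
Arguments unique_witness_eq {T} P {x y}.

Definition mono (A B : C) (m : Hom A B) : Prop :=
  forall (S : C) (g h : Hom S A), m o g = m o h -> g = h.

Definition epi (A B : C) (e : Hom A B) : Prop :=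
  forall (Z : C) (g h : Hom B Z), g o e = h o e -> g = h.

Lemma regular_epi_epi (A B : C) (e : Hom A B) : regular_epi e -> epi e.
Proof.
  intros [W [f1 [f2 [Hc U]]]] Z g h E.
  assert (Hk : (g o e) o f1 = (g o e) o f2) by (rewrite <- !comp_assoc, Hc; reflexivity).
  apply (unique_witness_eq (fun u => u o e = g o e)); [exact (U Z _ Hk) | reflexivity | auto].
Qed.

Lemma epi_comp (A B D : C) (f : Hom A B) (g : Hom B D) : epi f -> epi g -> epi (g o f).
Proof.
  intros Hf Hg Z u v E. apply Hg, Hf. rewrite <- !comp_assoc. exact E.
Qed.

Lemma pullback_exists : has_finite_limits C ->
  forall (A B D : C) (f : Hom A D) (g : Hom B D),
  exists (P : C) (p1 : Hom P A) (p2 : Hom P B), is_pullback f g p1 p2.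
Proof.
  intros [_ [Hprod Heq]] A B D f g.
  destruct (Hprod A B) as [P0 [q1 [q2 Hp]]].
  destruct (Heq P0 D (f o q1) (g o q2)) as [E [e [He Ue]]].
  exists E, (q1 o e), (q2 o e). split.
  - rewrite !comp_assoc. exact He.
  - intros S a b Hab.
    destruct (Hp S a b) as [h [[H1 H2] _]].
    assert (Hfh : (f o q1) o h = (g o q2) o h) by (rewrite <- !comp_assoc, H1, H2; exact Hab).
    destruct (Ue S h Hfh) as [u [Hu Uu]].
    exists u. split.
    + split; rewrite <- comp_assoc, Hu; assumption.
    + intros u' [E1 E2]. apply Uu.
      apply (unique_witness_eq (fun h => q1 o h = a /\ q2 o h = b)).
      * apply Hp.
      * rewrite !comp_assoc. auto.
      * auto.
Qed.

Lemma pullback_jointly_monic (A B D : C) (f : Hom A D) (g : Hom B D)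
  (P : C) (p1 : Hom P A) (p2 : Hom P B) :
  is_pullback f g p1 p2 -> jointly_monic2 (Build_Rel2 p1 p2).
Proof.
  intros [Hc U] S h k E1 E2. simpl in *.
  assert (Hh : f o (p1 o h) = g o (p2 o h)) by (rewrite !comp_assoc, Hc; reflexivity).
  apply (unique_witness_eq (fun u => p1 o u = p1 o h /\ p2 o u = p2 o h)).
  - exact (U S _ _ Hh).
  - auto.
  - auto.
Qed.

Lemma kernel_pair_effective (A D : C) (f : Hom A D) : has_finite_limits C ->
  exists K : Rel2 A A, is_effective_equiv_rel K /\
    forall (S : C) (x y : Hom S A), mem2 K x y <-> f o x = f o y.
Proof.
  intros HL. destruct (pullback_exists HL f f) as [P [k1 [k2 Hpb]]].
  pose proof Hpb as [Hc U].
  assert (Hmem : forall (S : C) (x y : Hom S A),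
             mem2 (Build_Rel2 k1 k2) x y <-> f o x = f o y).
  { intros S x y. split.
    - intros [h [E1 E2]]. simpl in *. subst. rewrite !comp_assoc, Hc. reflexivity.
    - intros E. destruct (U S x y E) as [h [Eh _]]. exists h. exact Eh. }
  exists (Build_Rel2 k1 k2). split; [|exact Hmem].
  repeat split.
  - exact (pullback_jointly_monic Hpb).
  - intros S x. apply Hmem. reflexivity.
  - intros S x y H. apply Hmem. apply Hmem in H. auto.
  - intros S x y z H1 H2. apply Hmem. apply Hmem in H1. apply Hmem in H2. congruence.
  - exists D, f. exact Hpb.
Qed.

Lemma intersection_exists (X Y : C) (R T : Rel2 X Y) : has_finite_limits C ->
  jointly_monic2 R -> jointly_monic2 T -> exists M, is_intersection R T M.
Proof.
  intros HL HRm HTm. pose proof HL as [_ [Hprod _]].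
  destruct (Hprod X Y) as [D [d1 [d2 Hp]]].
  destruct (Hp _ (rel2_1 R) (rel2_2 R)) as [r [[Er1 Er2] _]].
  destruct (Hp _ (rel2_1 T) (rel2_2 T)) as [t [[Et1 Et2] _]].
  destruct (pullback_exists HL r t) as [P [p1 [p2 Hpb]]].
  pose proof Hpb as [Hc U].
  assert (F1 : rel2_1 T o p2 = rel2_1 R o p1)
    by (rewrite <- Et1, <- Er1, <- !comp_assoc, Hc; reflexivity).
  assert (F2 : rel2_2 T o p2 = rel2_2 R o p1)
    by (rewrite <- Et2, <- Er2, <- !comp_assoc, Hc; reflexivity).
  exists (Build_Rel2 (rel2_1 R o p1) (rel2_2 R o p1)). split.
  - intros S h k E1 E2. simpl in *. rewrite <- !comp_assoc in E1, E2.
    apply (pullback_jointly_monic Hpb); simpl.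
    + apply HRm; assumption.
    + apply HTm; rewrite !comp_assoc; [rewrite F1 | rewrite F2];
        rewrite <- !comp_assoc; assumption.
  - intros S x y. split.
    + intros [w [E1 E2]]. simpl in *. split.
      * exists (p1 o w). rewrite !comp_assoc. auto.
      * exists (p2 o w). rewrite !comp_assoc, F1, F2. auto.
    + intros [[hr [R1 R2]] [ht [T1 T2]]].
      assert (E : r o hr = t o ht).
      { apply (unique_witness_eq (fun u => d1 o u = x /\ d2 o u = y)).
        - apply Hp.
        - rewrite !comp_assoc, Er1, Er2. auto.
        - rewrite !comp_assoc, Et1, Et2. auto. }
      destruct (U S hr ht E) as [w [[W1 W2] _]].
      exists w. simpl. rewrite <- !comp_assoc, W1. auto.
Qed.

Hypothesis HR : is_regular C.

(* After precomposing with the regular epimorphism s1 o s2, both g and h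
   factor through q; the two factorizations lie in the kernel pair of f,
   which q coequalizes. *)
Lemma coequalizer_kernel_pair_mono (A D M : C) (f : Hom A D) (K : C) (k1 k2 : Hom K A)
  (q : Hom A M) (m : Hom M D) :
  is_kernel_pair f k1 k2 -> is_coequalizer k1 k2 q -> m o q = f -> mono m.
Proof.
  destruct HR as [HL [_ Hstab]].
  intros Hk Hq Hm S g h Emgh.
  assert (Rq : regular_epi q) by (exists K, k1, k2; exact Hq).
  destruct (pullback_exists HL q g) as [S1 [a [s1 Hpb1]]].
  destruct (pullback_exists HL q (h o s1)) as [S2 [b [s2 Hpb2]]].
  pose proof (Hstab _ _ _ _ _ _ _ _ Rq Hpb1) as Rs1.
  pose proof (Hstab _ _ _ _ _ _ _ _ Rq Hpb2) as Rs2.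
  destruct Hpb1 as [C1 _]. destruct Hpb2 as [C2 _].
  assert (Efab : f o (a o s2) = f o b).
  { rewrite <- Hm, <- !comp_assoc, (comp_assoc s2 a q), C1, C2, !comp_assoc, Emgh.
    reflexivity. }
  destruct Hk as [_ Uk]. destruct (Uk _ _ _ Efab) as [t [[T1 T2] _]].
  apply (epi_comp (regular_epi_epi Rs2) (regular_epi_epi Rs1)).
  rewrite comp_assoc, <- C1, <- comp_assoc, <- T1, comp_assoc, (proj1 Hq),
    <- comp_assoc, T2, C2, comp_assoc.
  reflexivity.
Qed.

Lemma image_factorization (P A B : C) (f1 : Hom P A) (f2 : Hom P B) :
  exists (M : C) (e : Hom P M) (m1 : Hom M A) (m2 : Hom M B),
    regular_epi e /\ m1 o e = f1 /\ m2 o e = f2 /\ jointly_monic2 (Build_Rel2 m1 m2).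
Proof.
  destruct HR as [HL [Hcoeq _]]. pose proof HL as [_ [Hprod _]].
  destruct (Hprod A B) as [D [d1 [d2 Hp]]].
  destruct (Hp _ f1 f2) as [f [[Ef1 Ef2] _]].
  destruct (pullback_exists HL f f) as [K [k1 [k2 Hk]]].
  destruct (Hcoeq _ _ f _ k1 k2 Hk) as [M [q Hq]].
  destruct (proj2 Hq D f (proj1 Hk)) as [m [Hm _]].
  pose proof (coequalizer_kernel_pair_mono Hk Hq Hm) as Mm.
  exists M, q, (d1 o m), (d2 o m). repeat split.
  - exists K, k1, k2. exact Hq.
  - rewrite <- comp_assoc, Hm. exact Ef1.
  - rewrite <- comp_assoc, Hm. exact Ef2.
  - intros S g h E1 E2. simpl in *. apply Mm.
    apply (unique_witness_eq (fun u => d1 o u = d1 o m o g /\ d2 o u = d2 o m o g)).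
    + apply Hp.
    + rewrite !comp_assoc. auto.
    + rewrite !comp_assoc. auto.
Qed.

Lemma composite_exists (X Y Z : C) (R : Rel2 X Y) (T : Rel2 Y Z) :
  exists M, is_composite R T M.
Proof.
  destruct (pullback_exists (proj1 HR) (rel2_2 R) (rel2_1 T)) as [P [p1 [p2 Hpb]]].
  destruct (image_factorization (rel2_1 R o p1) (rel2_2 T o p2))
    as [M [e [m1 [m2 [Re [E1 [E2 Jm]]]]]]].
  exists (Build_Rel2 m1 m2). split; [exact Jm|].
  exists P, p1, p2, e. auto.
Qed.

Lemma composite_intro (X Y Z : C) (R : Rel2 X Y) (T : Rel2 Y Z) (M : Rel2 X Z)
  (S : C) (x : Hom S X) (w : Hom S Y) (y : Hom S Z) :
  is_composite R T M -> mem2 R x w -> mem2 T w y -> mem2 M x y.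
Proof.
  intros [_ [P [p1 [p2 [e [[Hc U] [_ [E1 E2]]]]]]]] [hr [R1 R2]] [ht [T1 T2]].
  assert (H : rel2_2 R o hr = rel2_1 T o ht) by congruence.
  destruct (U S hr ht H) as [t [[P1 P2] _]].
  exists (e o t). rewrite !comp_assoc, E1, E2, <- !comp_assoc, P1, P2. auto.
Qed.

Lemma composite_elim (X Y Z : C) (R : Rel2 X Y) (T : Rel2 Y Z) (M : Rel2 X Z)
  (S : C) (x : Hom S X) (y : Hom S Z) :
  is_composite R T M -> mem2 M x y ->
  exists (S' : C) (s : Hom S' S) (w : Hom S' Y),
    regular_epi s /\ mem2 R (x o s) w /\ mem2 T w (y o s).
Proof.
  intros [_ [P [p1 [p2 [e [[Hc _] [Re [E1 E2]]]]]]]] [g [G1 G2]].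
  destruct HR as [HL [_ Hstab]].
  destruct (pullback_exists HL e g) as [S' [a [s Hpb]]].
  pose proof (Hstab _ _ _ _ _ _ _ _ Re Hpb) as Rs.
  destruct Hpb as [Ca _].
  exists S', s, (rel2_2 R o (p1 o a)). split; [exact Rs|]. split.
  - exists (p1 o a). split; [|reflexivity].
    rewrite comp_assoc, <- E1, <- comp_assoc, Ca, comp_assoc, G1. reflexivity.
  - exists (p2 o a). split.
    + rewrite !comp_assoc, Hc. reflexivity.
    + rewrite comp_assoc, <- E2, <- comp_assoc, Ca, comp_assoc, G2. reflexivity.
Qed.

Lemma mem3_regular_epi_descent (X Y Z : C) (R : Rel3 X Y Z) (S S' : C) (s : Hom S' S)
  (x : Hom S X) (y : Hom S Y) (z : Hom S Z) :
  jointly_monic3 R -> regular_epi s -> mem3 R (x o s) (y o s) (z o s) -> mem3 R x y z.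
Proof.
  intros Jm Rs [t [T1 [T2 T3]]].
  pose proof (regular_epi_epi Rs) as Es.
  destruct Rs as [W [c1 [c2 [Hc U]]]].
  assert (Ht : t o c1 = t o c2).
  { apply Jm; rewrite !comp_assoc; [rewrite T1 | rewrite T2 | rewrite T3];
      rewrite <- !comp_assoc, Hc; reflexivity. }
  destruct (U _ t Ht) as [u [Hu _]].
  exists u. rewrite <- Hu, !comp_assoc in T1, T2, T3.
  repeat split; apply Es; assumption.
Qed.

Lemma distributive_elim (X : C) (alpha beta gamma : Rel2 X X) :
  effective_equiv_distributive C ->
  is_effective_equiv_rel alpha -> is_effective_equiv_rel beta ->
  is_effective_equiv_rel gamma ->
  forall (S : C) (u v w : Hom S X),
  mem2 alpha u v -> mem2 beta u w -> mem2 gamma w v ->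
  exists (S' : C) (s : Hom S' S) (t : Hom S' X), regular_epi s /\
    mem2 alpha (u o s) t /\ mem2 beta (u o s) t /\
    mem2 alpha t (v o s) /\ mem2 gamma t (v o s).
Proof.
  intros Hdist Ea Eb Eg S u v w Huv Huw Hwv.
  pose proof (proj1 HR) as HL.
  assert (Ja : jointly_monic2 alpha) by apply Ea.
  destruct (composite_exists beta gamma) as [BG HBG].
  destruct (intersection_exists HL Ja (proj1 HBG)) as [L HL'].
  destruct (intersection_exists HL Ja (proj1 (proj1 Eb))) as [AB HAB].
  destruct (intersection_exists HL Ja (proj1 (proj1 Eg))) as [AG HAG].
  destruct (composite_exists AB AG) as [Rt HRt].
  assert (Luv : mem2 L u v)
    by (apply (proj2 HL'); split; [exact Huv | exact (composite_intro HBG Huw Hwv)]).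
  apply (Hdist _ _ _ _ Ea Eb Eg _ _ _ _ _ HBG HL' HAB HAG HRt) in Luv.
  destruct (composite_elim HRt Luv) as [S' [s [t [Rs [Hab Hag]]]]].
  apply (proj2 HAB) in Hab. apply (proj2 HAG) in Hag.
  exists S', s, t. tauto.
Qed.

End Regular.

Theorem lemma3p2 (C : Category) :
  is_regular C -> effective_equiv_distributive C -> is_majority_category C.
Proof.
  intros HR Hdist. pose proof (proj1 HR) as HL.
  split; [exact (proj1 (proj2 HL))|].
  intros X Y Z R Jm S x x' y y' z z' [u [U1 [U2 U3]]] [v [V1 [V2 V3]]] [w [W1 [W2 W3]]].
  destruct (kernel_pair_effective (rel3_1 R) HL) as [Al [EAl MAl]].
  destruct (kernel_pair_effective (rel3_2 R) HL) as [Be [EBe MBe]].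
  destruct (kernel_pair_effective (rel3_3 R) HL) as [Ga [EGa MGa]].
  assert (Huv : mem2 Al u v) by (apply MAl; congruence).
  assert (Huw : mem2 Be u w) by (apply MBe; congruence).
  assert (Hwv : mem2 Ga w v) by (apply MGa; congruence).
  destruct (distributive_elim HR Hdist EAl EBe EGa Huv Huw Hwv)
    as [S' [s [t [Rs [Ha [Hb [_ Hg]]]]]]].
  apply MAl in Ha. apply MBe in Hb. apply MGa in Hg.
  apply (mem3_regular_epi_descent Jm Rs). exists t.
  rewrite <- U1, <- U2, <- V3, <- !comp_assoc, Hb, Hg, <- Ha. auto.
Qed.
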